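(* Let $0<\alpha<1$ and $1\le i\le k\le 6$, and let $w^{(k,i)}_{n,j}$, $\omega^{(k,i)}_m$ be the weights defined in the context. Let $u_0,\dots,u_{k-1}\in\mathbb{C}$ be arbitrary (bounded) starting values and define the power series $$g^{(k,i)}(\xi)=\sum_{n=0}^{\infty}g^{(k,i)}_n\xi^n,\qquad g^{(k,i)}_n=-\sum_{j=0}^{k-1}u_{j}\big(w_{n+k,j}^{(k,i)}+\omega_{n+k-j}^{(k,i)}\big).$$ Then $g^{(k,i)}_n\to 0$ as $n\to\infty$.
   Context: Uniform grid $t_n=n\Delta t$, $\Delta t>0$, $I_j=[t_{j-1},t_j]$. For a function $u$ and integers $m\ge1$, $j$, $q$, let $p^{m}_{j,q}$ be the polynomial of degree at most $m$ interpolating $u$ at $t_{j+q-m-1},\dots,t_{j+q-1}$. For $1\le i\le k\le 6$ and $n\ge k$, let $P^{k}_{i,n}$ be the continuous piecewise polynomial on $[0,t_n]$ equal on $I_j$ to $p^{k-1}_{j,k-j}$ for $1\le j\le k-i$, to $p^{k}_{j,i}$ for $k-i+1\le j\le n-i+1$, and to $p^{k}_{j,n+1-j}$ for $n-i+2\le j\le n$, and set $D^{\alpha}_{k,i}u_n=\frac{1}{\Gamma(1-\alpha)}\int_0^{t_n}(t_n-\xi)^{-\alpha}(P^{k}_{i,n})'(\xi)\,\mathrm{d}\xi$. This is a linear combination of $u_0=u(t_0),\dots,u_n=u(t_n)$; for $k\le j\le n$ the coefficient of $u_j$ in $(\Delta t)^{\alpha}D^{\alpha}_{k,i}u_n$ depends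 only on $n-j$ (not on $n$ or $\Delta t$ separately) and is denoted $\omega^{(k,i)}_{n-j}$; this defines $\omega^{(k,i)}_m$ for all $m\ge 0$. The weights $w^{(k,i)}_{n,j}$ ($0\le j\le k-1$, $n\ge k$) are then defined by $(\Delta t)^{\alpha}D^{\alpha}_{k,i}u_n=\sum_{j=0}^{k-1}w^{(k,i)}_{n,j}u_j+\sum_{j=0}^{n}\omega^{(k,i)}_{n-j}u_j$ (for arbitrary values $u_j$). *)

From HB Require Import structures.
From mathcomp Require Import all_boot all_order all_algebra.
From mathcomp Require Import all_classical all_reals all_analysis.
From mathcomp Require Import complex.
Set Implicit Arguments. Unset Strict Implicit. Unset Printing Implicit Defensive.
Import Order.TTheory GRing.Theory Num.Theory.
Import numFieldNormedType.Exports.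
Local Open Scope classical_set_scope.
Local Open Scope ring_scope.

Section Weights.
Variable R : realType.

Definition Gamma (s : R) : R :=
  Rintegral (@lebesgue_measure R) `]0%R, +oo[
    (fun x => x `^ (s - 1) * expR (- x)).

Definition tpt (dt : R) (a : nat) : R := a%:R * dt.

Definition lagrange (dt : R) (u : nat -> R) (m s0 : nat) : {poly R} :=
  \sum_(a < m.+1) u (s0 + a)%N *:
     \prod_(b < m.+1 | b != a)
        (('X - (tpt dt (s0 + b)%N)%:P) *
         ((tpt dt (s0 + a)%N - tpt dt (s0 + b)%N)^-1)%:P).

(* p^m_{j,q}: interpolates u at t_{j+q-m-1}, ..., t_{j+q-1}
   (in every use below j + q >= m + 1, so the nat subtraction is exact). *)
Definition pint (dt : R) (u : nat -> R) (m j q : nat) : {poly R} :=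
  lagrange dt u m (j + q - m - 1)%N.

(* The polynomial piece of P^k_{i,n} on I_j = [t_{j-1}, t_j], 1 <= j <= n. *)
Definition Ppiece (dt : R) (u : nat -> R) (k i n j : nat) : {poly R} :=
  if (j <= k - i)%N then pint dt u k.-1 j (k - j)
  else if (j <= n - i + 1)%N then pint dt u k j i
  else pint dt u k j (n + 1 - j).

Definition Dfrac (dt alpha : R) (k i : nat) (u : nat -> R) (n : nat) : R :=
  (Gamma (1 - alpha))^-1 *
  \sum_(1 <= j < n.+1)
     Rintegral (@lebesgue_measure R) `[tpt dt j.-1, tpt dt j]
       (fun x => (tpt dt n - x) `^ (- alpha) * ((Ppiece dt u k i n j)^`()).[x]).

(* Coefficient of u_l in (dt)^alpha D^alpha_{k,i} u_n (the operator is linear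
   in u, so this is its value on the l-th unit sequence). *)
Definition coef (dt alpha : R) (k i n l : nat) : R :=
  dt `^ alpha * Dfrac dt alpha k i (fun m => (m == l)%:R) n.

(* omega^{(k,i)}_m : the coefficient of u_j (k <= j <= n) in
   (dt)^alpha D^alpha_{k,i} u_n, which depends only on m = n - j;
   we take dt = 1, n = m + k, j = k. *)
Definition omega (alpha : R) (k i m : nat) : R := coef 1 alpha k i (m + k) k.

(* w^{(k,i)}_{n,j}, 0 <= j <= k-1, n >= k: the coefficient of u_j is
   w_{n,j} + omega_{n-j}. *)
Definition wstart (alpha : R) (k i n j : nat) : R :=
  coef 1 alpha k i n j - omega alpha k i (n - j).

Definition gcoef (alpha : R) (k i : nat) (u : nat -> R[i]) (n : nat) : R[i] :=
  - \sum_(j < k) u j * (wstart alpha k i (n + k) j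
                         + omega alpha k i (n + k - j))%:C%C.

End Weights.

From Pilot Require Import Defs.
From HB Require Import structures.
From mathcomp Require Import all_boot all_order all_algebra.
From mathcomp Require Import all_classical all_reals all_analysis.
From mathcomp Require Import complex.
From mathcomp Require Import zify measurable_realfun.
Import Order.TTheory GRing.Theory Num.Theory.
Import numFieldNormedType.Exports.
Local Open Scope classical_set_scope.
Local Open Scope ring_scope.

(* For a starting index j < k, the coefficient of u_j in (D^alpha_{k,i} u)_n
   only receives contributions from the first 2k intervals I_l: on every later
   interval the interpolation nodes lie beyond j.  On each of these finitely
   many intervals the integrand is a fixed polynomial times the kernel
   (t_n - x)^(-alpha), which is O(n^(-alpha)) there; hence every coefficient,
   and so every g_n, tends to 0. *)

Section Asymptotics.
Context {R : realType}.

Lemma horner_bounded (p : {poly R}) (C : R) :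
  exists M, forall x, `|x| <= C -> `|p.[x]| <= M.
Proof.
exists (\sum_(i < size p) `|p`_i| * `|C| ^+ i) => x hx.
rewrite horner_coef; apply: (le_trans (ler_norm_sum _ _ _)).
apply: ler_sum => j _; rewrite normrM normrX.
apply: ler_wpM2l => //; apply: lerXn2r; rewrite ?nnegrE //.
exact: le_trans hx (ler_norm _).
Qed.

Lemma cvg_powRN_nat (a : R) : 0 < a ->
  (fun n : nat => n.+1%:R `^ (- a)) @ \oo --> 0.
Proof.
move=> a0; apply/cvgrPdist_le => e e0; near=> n.
rewrite sub0r normrN ger0_norm ?powR_ge0 // powRN.
have le_n : (e^-1) `^ (a^-1) <= n.+1%:R.
  apply: (@le_trans _ _ n%:R); last by rewrite ler_nat.
  by near: n; exact: nbhs_infty_ger.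
have le_e : e^-1 <= n.+1%:R `^ a.
  have := ge0_ler_powR (ltW a0) _ _ le_n.
  rewrite -powRrM mulVf ?gt_eqF // powRr1 ?invr_ge0 ?(ltW e0) //.
  by apply; rewrite nnegrE ?powR_ge0.
by rewrite -[e]invrK lef_pV2 ?posrE ?powR_gt0 ?invr_gt0.
Unshelve. all: by end_near. Qed.

Lemma le_normr_Rintegral_itv (a b M : R) (f : R -> R) : a <= b ->
  measurable_fun setT f -> (forall x, a <= x <= b -> `|f x| <= M) ->
  `|Rintegral (@lebesgue_measure R) `[a, b] f| <= M * (b - a).
Proof.
move=> ab mf hf.
have muE : lebesgue_measure (`[a, b] : set R) = (b - a)%:E.
  rewrite lebesgue_measure_itv /= lte_fin.
  by case: ltgtP ab => //= -> _; rewrite subrr.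
have mu_fin : (lebesgue_measure (`[a, b] : set R) < +oo)%E by rewrite muE ltry.
have intf : (@lebesgue_measure R).-integrable `[a, b] (EFin \o f).
  apply: measurable_bounded_integrable => //; first exact: measurable_funTS.
  rewrite /bounded_near; near=> M' => x /=; rewrite in_itv /= => /hf h.
  apply: (le_trans h); near: M'; apply: nbhs_pinfty_ge; exact: num_real.
apply: (le_trans (le_normr_Rintegral _ intf)) => //.
have -> : M * (b - a) = Rintegral (@lebesgue_measure R) `[a, b] (fun=> M).
  by rewrite Rintegral_cst // (congr1 fine muE).
apply: le_Rintegral => //; first exact: integrable_norm.
apply: measurable_bounded_integrable => //.
by exists `|M|; split => [|y hy z _ /=]; [exact: num_real | exact: ltW].
Unshelve. all: by end_near. Qed.

Lemma cvg_sum0 {I : Type} (r : seq I) (P : pred I) (f : I -> nat -> R) :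
  (forall j, P j -> f j @ \oo --> 0) ->
  (fun n => \sum_(j <- r | P j) f j n) @ \oo --> 0.
Proof.
move=> f0.
have add_cont : continuous (fun z : R * R => z.1 + z.2).
  by move=> z; apply: add_continuous.
have := @cvg_big R I +%R 0 P add_cont nat \oo r f (fun=> 0) _.
by rewrite big1 //; apply.
Qed.

End Asymptotics.

Local Notation delta j := (fun m : nat => (m == j)%:R).

Definition Ppiece_head {R : realType} (dt : R) (u : nat -> R) (k i l : nat) :
    {poly R} :=
  if (l <= k - i)%N then pint dt u k.-1 l (k - l) else pint dt u k l i.

Section Interpolation.
Context {R : realType}.

Lemma lagrange_delta_eq0 (dt : R) (j m s0 : nat) :
  (j < s0)%N -> Defs.lagrange dt (delta j) m s0 = 0.
Proof.
move=> js; rewrite /Defs.lagrange big1 // => a _.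
have -> : (s0 + a == j) = false by apply/negbTE/eqP; lia.
by rewrite scale0r.
Qed.

Lemma Ppiece_delta_eq0 (dt : R) (k i N l j : nat) :
  (j < k)%N -> (2 * k < l)%N -> (2 * k <= N)%N ->
  Ppiece dt (delta j) k i N l = 0.
Proof.
move=> jk kl kN; rewrite /Ppiece /pint.
case: ifP => [|_]; first by lia.
by case: ifP => _; apply: lagrange_delta_eq0; lia.
Qed.

Lemma Ppiece_headE (dt : R) (u : nat -> R) (k i N l : nat) :
  (l <= N - i + 1)%N -> Ppiece dt u k i N l = Ppiece_head dt u k i l.
Proof. by rewrite /Ppiece /Ppiece_head => ->; case: ifP. Qed.

End Interpolation.

Section StartingWeights.
Variables (R : realType) (alpha : R).
Hypothesis alpha_gt0 : 0 < alpha.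

Lemma kernel_integral_cvg0 (l : nat) (q : {poly R}) :
  (fun n : nat => Rintegral (@lebesgue_measure R) `[tpt 1 l.-1, tpt 1 l]
     (fun x => (tpt 1 n - x) `^ (- alpha) * q.[x])) @ \oo --> 0.
Proof.
rewrite -(cvg_shiftn l.+1) /=.
have [Mq hMq] := horner_bounded q l%:R.
set a := tpt 1 l.-1; set b := tpt 1 l.
have ab : a <= b by rewrite /a /b /tpt !mulr1 ler_nat leq_pred.
set g := fun n : nat => Mq * (b - a) * n.+1%:R `^ (- alpha).
have g0 : g @ \oo --> 0.
  rewrite -(mulr0 (Mq * (b - a))); apply: cvgMl_tmp; exact: cvg_powRN_nat.
apply: (@squeeze_cvgr _ _ _ _ (fun n => - g n) g); last 2 first.
- by rewrite -oppr0; exact: cvgN.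
- exact: g0.
near=> n; rewrite -ler_norml /g mulrAC.
apply: le_normr_Rintegral_itv => //.
  apply: measurable_funM; last exact: measurable_poly.
  apply: (measurableT_comp (f := @powR R ^~ (- alpha))) => //.
  exact: (measurable_funB (f := cst _) (g := id)).
move=> x /andP [ax xb].
have x0 : 0 <= x by apply: le_trans ax; rewrite /a /tpt mulr1.
have xl : x <= l%:R by rewrite /b /tpt mulr1 in xb.
(* the kernel singularity is at t_{n+l+1}, at distance >= n+1 from I_l *)
have far : n.+1%:R <= tpt 1 (n + l.+1) - x.
  rewrite /tpt mulr1 lerBrDr; apply: le_trans (lerD (lexx _) xl) _.
  by rewrite -natrD ler_nat; lia.
have far0 : 0 < tpt 1 (n + l.+1) - x by exact: lt_le_trans far.
rewrite normrM mulrC; apply: ler_pM => //; first by apply: hMq; rewrite ger0_norm.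
rewrite ger0_norm ?powR_ge0 // !powRN lef_pV2 ?posrE ?powR_gt0 //.
by apply: ge0_ler_powR; rewrite ?nnegrE // ltW.
Unshelve. all: by end_near. Qed.

Lemma coef_delta_head (k i j n : nat) :
  (j < k)%N -> (i <= k)%N -> (2 * k <= n)%N ->
  coef 1 alpha k i (n + k) j = (Gamma (1 - alpha))^-1 *
    \sum_(1 <= l < (2 * k).+1) Rintegral (@lebesgue_measure R)
       `[tpt 1 l.-1, tpt 1 l] (fun x => (tpt 1 (n + k) - x) `^ (- alpha) *
          ((Ppiece_head 1 (delta j) k i l)^`()).[x]).
Proof.
move=> jk ik kn; rewrite /coef /Dfrac powR1 mul1r; congr (_ * _).
rewrite (big_cat_nat _ (n := (2 * k).+1)) //=; last by lia.
rewrite [X in _ + X]big1_seq ?addr0; last first.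
  move=> l /andP [_]; rewrite mem_index_iota => /andP [kl _].
  rewrite Ppiece_delta_eq0 ?deriv0; try lia.
  rewrite (_ : (fun x => _) = fun=> 0); last first.
    by apply: funext => x; rewrite horner0 mulr0.
  by rewrite Rintegral_cst // mul0r.
apply: eq_big_seq => l; rewrite mem_index_iota => /andP [_ lk].
by rewrite Ppiece_headE //; lia.
Qed.

Lemma coef_start_cvg0 (k i j : nat) : (i <= k)%N -> (j < k)%N ->
  (fun n : nat => coef 1 alpha k i (n + k) j) @ \oo --> 0.
Proof.
move=> ik jk.
pose I l n := Rintegral (@lebesgue_measure R) `[tpt 1 l.-1, tpt 1 l]
  (fun x => (tpt 1 (n + k) - x) `^ (- alpha) *
     ((Ppiece_head 1 (delta j) k i l)^`()).[x]).
have I0 l : I l @ \oo --> 0.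
  by have := kernel_integral_cvg0 l (Ppiece_head 1 (delta j) k i l)^`();
     rewrite -(cvg_shiftn k).
apply: cvg_trans (near_eq_cvg (f := fun n =>
  (Gamma (1 - alpha))^-1 * \sum_(1 <= l < (2 * k).+1) I l n) _) _.
  by near=> n; rewrite coef_delta_head //; near: n; apply: nbhs_infty_ge.
have := cvg_sum0 (index_iota 1 (2 * k).+1) xpredT I (fun l _ => I0 l).
by move/(cvgMl_tmp (a := (Gamma (1 - alpha))^-1)); rewrite mulr0.
Unshelve. all: by end_near. Qed.

Lemma gcoefE (k i : nat) (u : nat -> R[i]) (n : nat) :
  gcoef alpha k i u n = - \sum_(j < k) u j * (coef 1 alpha k i (n + k) j)%:C%C.
Proof. by congr (- _); apply: eq_bigr => j _; rewrite /wstart subrK. Qed.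

Lemma real_linear_gcoef_cvg0 (f : {additive R[i] -> R}) (k i : nat)
    (u : nat -> R[i]) :
  (forall z x, f (z * x%:C%C) = f z * x) -> (i <= k)%N ->
  (fun n => f (gcoef alpha k i u n)) @ \oo --> 0.
Proof.
move=> fM ik.
have coef0 j : (j < k)%N ->
    (fun n => f (u j * (coef 1 alpha k i (n + k) j)%:C%C)) @ \oo --> 0.
  move=> jk; under eq_fun do rewrite fM.
  by rewrite -(mulr0 (f (u j))); apply: cvgMl_tmp; exact: coef_start_cvg0.
under eq_fun do rewrite gcoefE raddfN raddf_sum.
by move/cvgN: (cvg_sum0 (index_enum 'I_k) xpredT _ (fun j _ => coef0 j (ltn_ord j)));
  rewrite oppr0.
Qed.

End StartingWeights.

Theorem lemma3p4 (R : realType) (alpha : R) (k i : nat) (u : nat -> R[i]) :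
  0 < alpha < 1 -> (1 <= i <= k)%N -> (k <= 6)%N ->
  (fun n => complex.Re (gcoef alpha k i u n)) @ \oo --> (0 : R) /\
  (fun n => complex.Im (gcoef alpha k i u n)) @ \oo --> (0 : R).
Proof.
move=> /andP [a0 _] /andP [_ ik] _.
by split; apply: real_linear_gcoef_cvg0 => // -[a b] x /=;
  rewrite mulr0 ?subr0 ?add0r.
Qed.
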